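(* Let $(\mathcal G,c)$ be a finite connected weighted planar graph and $W\subset\mathcal V\mathcal G$ nonempty. For $x\in\mathcal V\mathcal G$ let $X^x$ be the random walk on $(\mathcal G,c)$ started at $x$ and $\tau_x$ its first hitting time of $W$. Then for all $x,y\in\mathcal V\mathcal G\setminus W$, $$d_{TV}\big(X^x_{\tau_x},X^y_{\tau_y}\big)\le\mathbb P\big(X^x|_{[0,\tau_x]}\text{ does not disconnect }y\text{ from }W\big),$$ where $d_{TV}$ is total variation distance between the laws, and ''$X^x|_{[0,\tau_x]}$ disconnects $y$ from $W$'' means that every path in $\mathcal G$ from $y$ to $W$ visits some vertex in $\{X^x_0,\dots,X^x_{\tau_x}\}$.
   Context: The random walk on a weighted graph $(\mathcal G,c)$ with positive conductances moves from $x$ to $y$ with probability $c_{xy}/\pi(x)$, where $c_{xy}$ is the total conductance of edges joining $x$ and $y$ and $\pi(x)=\sum_{e\ni x}c_e$. *)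

From HB Require Import structures.
From mathcomp Require Import all_boot all_order all_algebra.
From mathcomp Require Import all_classical all_reals all_analysis.
Set Implicit Arguments. Unset Strict Implicit. Unset Printing Implicit Defensive.
Import Order.TTheory GRing.Theory Num.Theory.
Import numFieldNormedType.Exports.
Local Open Scope classical_set_scope.
Local Open Scope ring_scope.

(* A finite weighted graph on the vertex type V is given by a conductance
   function c : V -> V -> R, symmetric and nonnegative; c x y is the TOTAL
   conductance of the edges joining x and y (loops allowed: c x x). *)

Section Defs.
Variables (R : realType) (V : finType).

Definition conductance (c : V -> V -> R) :=
  (forall x y, c x y = c y x) /\ (forall x y, 0 <= c x y).

Definition adj (c : V -> V -> R) : rel V := fun x y => 0 < c x y.

Definition connected_graph (c : V -> V -> R) :=
  forall x y, connect (adj c) x y.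

Definition planar_embedding (c : V -> V -> R) (pos : V -> R * R)
    (arc : V -> V -> R -> R * R) :=
  injective pos /\
  (forall x y, x != y -> adj c x y ->
     [/\ {within [set t : R | 0 <= t <= 1], continuous (arc x y)},
         arc x y 0 = pos x, arc x y 1 = pos y &
         (forall t, arc y x t = arc x y (1 - t))] /\
     {in [set t : R | 0 <= t <= 1] &, injective (arc x y)} /\
     (forall t z, 0 < t < 1 -> arc x y t <> pos z)) /\
  (forall x y u v s t, x != y -> u != v -> adj c x y -> adj c u v ->
     0 < s < 1 -> 0 < t < 1 -> arc x y s = arc u v t ->
     (x = u /\ y = v) \/ (x = v /\ y = u)).

Definition planar (c : V -> V -> R) :=
  exists pos arc, planar_embedding c pos arc.

Definition pi_c (c : V -> V -> R) (x : V) : R := \sum_(y : V) c x y.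
Definition trans (c : V -> V -> R) (x y : V) : R := c x y / pi_c c x.

Fixpoint pathprob (c : V -> V -> R) (x : V) (s : seq V) : R :=
  if s is y :: s' then trans c x y * pathprob c y s' else 1.

(* x :: s is a trajectory stopped at its first hitting time of W *)
Definition stopped (W : {set V}) (x : V) (s : seq V) : bool :=
  (last x s \in W) && all (fun v => v \notin W) (belast x s).

(* P( (X^x_0, ..., X^x_{tau_x}) satisfies A, tau_x < oo ) *)
Definition Pstop (c : V -> V -> R) (W : {set V}) (x : V)
    (A : pred (seq V)) : \bar R :=
  (\sum_(n <oo) (\sum_(t : n.-tuple V | stopped W x t && A (x :: t))
                   pathprob c x t)%:E)%E.

Definition hitlaw (c : V -> V -> R) (W : {set V}) (x : V) (B : {set V}) :=
  Pstop c W x (fun p => last x p \in B).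

Definition dTV_hit (c : V -> V -> R) (W : {set V}) (x y : V) : \bar R :=
  (\big[maxe/-oo]_(B : {set V}) `| hitlaw c W x B - hitlaw c W y B |)%E.

Definition disconnects (c : V -> V -> R) (S : seq V) (y : V) (W : {set V}) :=
  forall q : seq V, path (adj c) y q -> last y q \in W ->
    has (fun v => v \in S) (y :: q).

End Defs.

From HB Require Import structures.
From mathcomp Require Import all_boot all_order all_algebra.
From mathcomp Require Import all_classical all_reals all_analysis.
From mathcomp Require Import lra.
Import Order.TTheory GRing.Theory Num.Theory.
Local Open Scope ring_scope.
Set Implicit Arguments. Unset Strict Implicit. Unset Printing Implicit Defensive.

(* Fix B ⊆ V and let f(v) = P(X^v_{tau_v} ∈ B); f is harmonic off W.
   (1) If g is subharmonic on a set K ≠ V, the value of g at any point of K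
       is dominated by its value at a vertex outside K adjacent to K
       (maximum principle; connectedness propagates the top level set).
   (2) If the trajectory S disconnects y from W, then some vertex of S has
       f ≥ f(y): apply (1) to the component of y in the graph avoiding S.
   (3) For m ≥ 0, m · P(X^x visits {f ≥ m} before tau_x) ≤ f(x): apply (1)
       to the subharmonic function m·q − f, q the visiting probability.
   With m = f(y), (2) and (3) give f(y) − f(x) ≤ P(X^x does not disconnect
   y from W); applying this to B and to its complement bounds |f_x − f_y|
   for every B, hence the total variation distance. *)

Lemma sum_tuple0 (R : nmodType) (V : finType) (F : 0.-tuple V -> R) :
  \sum_(t : 0.-tuple V) F t = F [tuple].
Proof. by rewrite (big_pred1 [tuple]) // => t; apply/esym/eqP; exact: tuple0. Qed.

Lemma sum_tupleS (R : nmodType) (V : finType) n (F : n.+1.-tuple V -> R) :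
  \sum_(t : n.+1.-tuple V) F t =
    \sum_(u : V) \sum_(t : n.-tuple V) F [tuple of u :: t].
Proof.
rewrite pair_big /= (reindex (fun p : V * n.-tuple V => [tuple of p.1 :: p.2])) //=.
exists (fun t : n.+1.-tuple V => (thead t, [tuple of behead t])).
  by move=> [u t] _; congr pair; apply: val_inj.
by move=> t _; rewrite [in RHS](tuple_eta t); apply: val_inj.
Qed.

Section RandomWalk.
Variables (R : realType) (V : finType) (c : V -> V -> R).
Hypothesis hc : conductance c.

Lemma trans_ge0 x y : 0 <= trans c x y.
Proof. by case: hc => _ c0; rewrite divr_ge0 // sumr_ge0. Qed.

Lemma pi_gt0 u w : adj c u w -> 0 < pi_c c u.
Proof.
case: hc => _ c0 auw; rewrite /pi_c (bigD1 w) //= ltr_pwDl //.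
by rewrite sumr_ge0.
Qed.

Lemma trans_gt0 u w : adj c u w -> 0 < trans c u w.
Proof. by move=> auw; rewrite divr_gt0 // ?(pi_gt0 auw) //; case: hc. Qed.

Lemma trans_adj u w : 0 < trans c u w -> adj c u w.
Proof.
case: hc => _ c0 ht; rewrite /adj lt_def c0 andbT.
by apply/eqP => h; move: ht; rewrite /trans h mul0r ltxx.
Qed.

Lemma sum_trans_le1 v : \sum_u trans c v u <= 1.
Proof.
rewrite -mulr_suml -/(pi_c c v).
by have [->|p0] := eqVneq (pi_c c v) 0; rewrite ?mul0r ?ler01 ?divff.
Qed.

Lemma sum_trans1 u w : adj c u w -> \sum_x trans c u x = 1.
Proof. by move=> auw; rewrite -mulr_suml divff //; apply: lt0r_neq0; exact: pi_gt0 auw. Qed.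

Lemma pathprob_ge0 x s : 0 <= pathprob c x s.
Proof. by elim: s x => [|u s IH] x //=; rewrite mulr_ge0 ?trans_ge0. Qed.

Variable W : {set V}.

Definition stopped_mass (n : nat) (v : V) (A : pred (seq V)) : R :=
  \sum_(t : n.-tuple V | stopped W v t && A (v :: t)) pathprob c v t.

Lemma stopped_mass_ge0 n v A : 0 <= stopped_mass n v A.
Proof. by rewrite sumr_ge0 // => t _; rewrite pathprob_ge0. Qed.

Lemma stopped_mass0 v A :
  stopped_mass 0 v A = if (v \in W) && A [:: v] then 1 else 0.
Proof. by rewrite /stopped_mass big_mkcond sum_tuple0 /= /stopped /= andbT. Qed.

Lemma stopped_massS n v A :
  stopped_mass n.+1 v A = if v \in W then 0 else
     \sum_u trans c v u * stopped_mass n u (fun s => A (v :: s)).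
Proof.
rewrite /stopped_mass big_mkcond sum_tupleS; case: ifP => vW.
  by apply: big1 => u _; apply: big1 => t _; rewrite /stopped /= vW /= andbF.
apply: eq_bigr => u _; rewrite mulr_sumr [RHS]big_mkcond.
by apply: eq_bigr => t _ /=; rewrite /stopped /= vW /=; case: ifP.
Qed.

Lemma Pstop_series v A :
  Pstop c W v A = (\sum_(n <oo) (stopped_mass n v A)%:E)%E.
Proof. by []. Qed.

Lemma Pstop_rec v A :
  Pstop c W v A = if v \in W then (if A [:: v] then 1 else 0)%:E else
    (\sum_u (trans c v u)%:E * Pstop c W u (fun s => A (v :: s)))%E.
Proof.
have mass_ge0 n v' A' : (0 <= (stopped_mass n v' A')%:E)%E.
  by rewrite lee_fin stopped_mass_ge0.
rewrite Pstop_series nneseries_recl // -(nneseries_addn 1) //.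
under eq_eseriesr do rewrite addn1 stopped_massS.
rewrite stopped_mass0; have [vW|vW] /= := boolP (v \in W).
  by rewrite eseries0 ?adde0 //; case: (A _).
under eq_eseriesr do rewrite -sumEFin.
rewrite add0e nneseries_sum => [|u j _]; last by rewrite lee_fin mulr_ge0 ?trans_ge0 ?stopped_mass_ge0.
apply: eq_bigr => u _; under eq_eseriesr do rewrite EFinM.
exact: nneseriesZl.
Qed.

Lemma Pstop_ge0 v A : (0 <= Pstop c W v A)%E.
Proof. by apply: nneseries_ge0 => n _ _; rewrite lee_fin stopped_mass_ge0. Qed.

Lemma stopped_mass_partial_le1 N v A : \sum_(0 <= n < N) stopped_mass n v A <= 1.
Proof.
elim: N v A => [|N IH] v A; first by rewrite big_geq.
rewrite big_nat_recl // stopped_mass0.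
under eq_bigr do rewrite stopped_massS.
have [vW|vW] /= := boolP (v \in W).
  by rewrite big1 ?addr0 //; case: (A _).
rewrite add0r (exchange_big_dep xpredT) //=.
apply: le_trans (sum_trans_le1 v); apply: ler_sum => u _.
by rewrite -mulr_sumr ler_piMr ?trans_ge0.
Qed.

Lemma Pstop_le1 v A : (Pstop c W v A <= 1)%E.
Proof.
apply: lime_le; first by apply: is_cvg_nneseries => n _ _; rewrite lee_fin stopped_mass_ge0.
by apply: nearW => N; rewrite sumEFin lee_fin stopped_mass_partial_le1.
Qed.

(* Pstop is finite, so we work with its real value. *)
Definition pr (v : V) (A : pred (seq V)) : R := fine (Pstop c W v A).

Lemma PstopE v A : Pstop c W v A = (pr v A)%:E.
Proof.
rewrite fineK // ge0_fin_numE ?Pstop_ge0 //.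
by rewrite (le_lt_trans (Pstop_le1 v A)) // ltey.
Qed.

Lemma pr_ge0 v A : 0 <= pr v A.
Proof. by rewrite -lee_fin -PstopE Pstop_ge0. Qed.

Lemma pr_le1 v A : pr v A <= 1.
Proof. by rewrite -lee_fin -PstopE Pstop_le1. Qed.

Lemma pr_W v A : v \in W -> pr v A = if A [:: v] then 1 else 0.
Proof. by move=> vW; rewrite /pr Pstop_rec vW; case: (A _). Qed.

Lemma pr_rec v A : v \notin W ->
  pr v A = \sum_u trans c v u * pr u (fun s => A (v :: s)).
Proof.
move=> vW; apply: EFin_inj; rewrite -PstopE Pstop_rec (negbTE vW) -sumEFin.
by apply: eq_bigr => u _; rewrite PstopE.
Qed.

Lemma pr_ext v (A B : pred (seq V)) :
  (forall t, A (v :: t) = B (v :: t)) -> pr v A = pr v B.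
Proof.
move=> AB; congr fine; apply: eq_eseriesr => n _; congr EFin.
by apply: eq_bigl => t; rewrite AB.
Qed.

Lemma pr_mono v (A B : pred (seq V)) :
  (forall t, A (v :: t) -> B (v :: t)) -> pr v A <= pr v B.
Proof.
move=> AB; rewrite -lee_fin -!PstopE; apply: lee_nneseries.
  by move=> n _ _; rewrite lee_fin stopped_mass_ge0.
move=> n _; rewrite lee_fin /stopped_mass [X in X <= _]big_mkcond [X in _ <= X]big_mkcond.
apply: ler_sum => t _; case: (stopped _ _ _) => //=.
case At: (A _); first by rewrite (AB _ At).
by case: (B _); rewrite ?pathprob_ge0.
Qed.

Lemma pr_split v (A : pred (seq V)) : pr v A + pr v (fun s => ~~ A s) = pr v xpredT.
Proof.
apply: EFin_inj; rewrite EFinD -!PstopE !Pstop_series -nneseriesD => [|n _ _|n _ _];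
  rewrite ?lee_fin ?stopped_mass_ge0 //.
apply: eq_eseriesr => n _; rewrite -EFinD; congr EFin.
rewrite /stopped_mass [in RHS](bigID (fun t : n.-tuple V => A (v :: t))) /=.
by congr (_ + _); apply: eq_bigl => t; rewrite andbT.
Qed.

End RandomWalk.

Section MaximumPrinciple.
Variables (R : realType) (V : finType) (c : V -> V -> R).
Hypotheses (hc : conductance c) (hconn : connected_graph c).

Definition subharmonic_at (g : V -> R) (v : V) :=
  g v <= \sum_u trans c v u * g u.

(* A subharmonic function that is maximal at u among u's neighbours is
   constant on them: the mean can only reach g u if no term is smaller. *)
Lemma subharmonic_nbr_eq (g : V -> R) u w :
  subharmonic_at g u -> (forall x, adj c u x -> g x <= g u) ->
  adj c u w -> g w = g u.
Proof.
move=> sub_u le_nbr auw; apply/eqP; rewrite eq_le le_nbr //=.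
rewrite leNgt; apply/negP => gwu; move: sub_u; apply/negP; rewrite -ltNge.
have term_le x : trans c u x * g x <= trans c u x * g u.
  have [/eqP->|tx] := boolP (trans c u x == 0); first by rewrite !mul0r.
  have tx_gt0 : 0 < trans c u x by rewrite lt_def tx trans_ge0.
  by rewrite ler_pM2l // le_nbr // trans_adj.
apply: (@lt_le_trans _ _ (\sum_x trans c u x * g u)); last first.
  by rewrite -mulr_suml (sum_trans1 hc auw) mul1r.
rewrite (bigD1 w) //= [X in _ < X](bigD1 w) //=.
by rewrite ltr_leD ?ltr_pM2l ?trans_gt0 // ler_sum.
Qed.

Lemma max_principle (K : pred V) (g : V -> R) :
  (forall v, K v -> subharmonic_at g v) -> (exists z, ~~ K z) ->
  forall v, K v -> exists z u, [/\ ~~ K z, K u, adj c u z & g v <= g z].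
Proof.
move=> sub [z0 Kz0] v Kv; apply/not_existsP => no_bnd.
have bnd_lt z u : ~~ K z -> K u -> adj c u z -> g z < g v.
  move=> Kz Ku auz; rewrite ltNge; apply/negP => gvz.
  by apply: (no_bnd z); exists u.
have [v0 Kv0 maxv0] := @arg_maxP _ _ V v K g Kv.
have nbr_le u x : K u -> adj c u x -> g x <= g v0.
  case Kx: (K x) => Ku aux; first exact: maxv0.
  exact/ltW/(lt_le_trans (bnd_lt x u (negbT Kx) Ku aux))/maxv0.
(* the top level set of g on K is closed under adjacency *)
have top_closed u w : K u -> g u = g v0 -> adj c u w -> K w /\ g w = g v0.
  move=> Ku guM auw; have gwM : g w = g v0.
    by rewrite (subharmonic_nbr_eq (sub u Ku)) // guM => x; apply: nbr_le.
  split=> //; apply/negPn/negP => Kw.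
  by have := lt_le_trans (bnd_lt w u Kw Ku auw) (maxv0 v Kv); rewrite gwM ltxx.
suff reach : forall u p, K u -> g u = g v0 -> path (adj c) u p -> K (last u p).
  have [p pth zl] := connectP (hconn v0 z0).
  by have := reach v0 p Kv0 erefl pth; rewrite -zl (negbTE Kz0).
move=> u p; elim: p u => [|w p IH] u Ku guM //= /andP[auw pth].
by have [Kw gw] := top_closed u w Ku guM auw; apply: IH.
Qed.

End MaximumPrinciple.

Section HittingLaw.
Variables (R : realType) (V : finType) (c : V -> V -> R) (W : {set V}).
Hypotheses (hc : conductance c) (hconn : connected_graph c)
  (hW : W != finset.set0).

Local Notation pr := (pr c W).

Lemma exists_nbr v z : v != z -> exists w, adj c v w.
Proof.
move=> vz; have [[|w p] /= pth zl] := connectP (hconn v z).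
  by rewrite zl eqxx in vz.
by case/andP: pth => avw _; exists w.
Qed.

(* The walk hits W almost surely: 1 - P(tau_v < oo) is subharmonic off W,
   vanishes on W, so the maximum principle forces it to vanish. *)
Lemma pr_total v : pr v xpredT = 1.
Proof.
have [w0 w0W] := set0Pn _ hW.
have [vW|vW] := boolP (v \in W); first by rewrite (pr_W hc).
pose g u := 1 - pr u xpredT.
have sub u : u \notin W -> subharmonic_at c g u.
  move=> uW; have [w auw] : exists w, adj c u w.
    by apply: (exists_nbr (z := w0)); apply: contraNneq uW => ->.
  rewrite /subharmonic_at /g (pr_rec hc _ uW) -[in X in X - _](sum_trans1 hc auw).
  by rewrite -sumrB; apply: ler_sum => x _; rewrite mulrBr mulr1.
have W_reached : exists z, ~~ (z \notin W) by exists w0; rewrite negbK.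
have [z [u [/negPn zW _ _]]] := max_principle hc hconn sub W_reached vW.
rewrite /g (pr_W hc _ zW) subrr subr_le0 => pr_ge1.
by apply/eqP; rewrite eq_le (pr_le1 hc).
Qed.

Lemma pr_compl v A : pr v A + pr v (fun s => ~~ A s) = 1.
Proof. by rewrite (pr_split hc) pr_total. Qed.

Definition harmonic_off (f : V -> R) :=
  forall v, v \notin W -> f v = \sum_u trans c v u * f u.

Definition hitprob (B : {set V}) (v : V) : R := pr v (fun s => last v s \in B).

Lemma hitprobE B v : hitlaw c W v B = (hitprob B v)%:E.
Proof. exact: PstopE. Qed.

Lemma hitprob_harmonic B : harmonic_off (hitprob B).
Proof. by move=> v vW; rewrite /hitprob (pr_rec hc _ vW). Qed.

Lemma hitprob_compl B v : hitprob (~: B) v = 1 - hitprob B v.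
Proof.
rewrite -(pr_compl v (fun s => last v s \in B)) addrC addKr.
by apply: pr_ext => t; rewrite finset.in_setC.
Qed.

(* Step (2): a set separating y from W contains a vertex where a harmonic
   function is at least its value at y; apply the maximum principle to the
   component of y in the graph with S removed, which misses W. *)
Lemma disconnects_level (f : V -> R) y (S : seq V) :
  harmonic_off f -> disconnects c S y W -> has (fun v => f y <= f v) S.
Proof.
move=> fh hd; have [w0 w0W] := set0Pn _ hW.
have [yS|yS] := boolP (y \in S); first by apply/hasP; exists y.
pose avoidS := [rel a b | adj c a b && (b \notin S)].
pose K v := connect avoidS y v.
have avoid u q : path avoidS u q -> all [pred b | b \notin S] q.
  by elim: q u => [|w q IH] u //= /andP[/andP[_ ->] /IH].
have KW v : K v -> v \notin W.
  case/connectP=> p pth ->; apply/negP => lW.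
  have sub_adj : subrel avoidS (adj c) by move=> a b /andP[].
  have := hd p (sub_path sub_adj pth) lW; rewrite /= (negbTE yS) /=.
  by apply/negP; rewrite -all_predC; exact: avoid pth.
have sub v : K v -> subharmonic_at c f v.
  by move=> Kv; rewrite /subharmonic_at -fh ?KW.
have out : exists z, ~~ K z by exists w0; apply/negP => /KW; rewrite w0W.
have [z [u [Kz Ku auz le_yz]]] := max_principle hc hconn sub out (connect0 avoidS y).
apply/hasP; exists z => //; apply/negPn/negP => zS; move/negP: Kz; apply.
by apply: (connect_trans Ku); apply: connect1; rewrite /= auz zS.
Qed.

(* The
   function m·q − f is subharmonic where f < m off W, and is <= 0 elsewhere. *)
Lemma level_visit_bound (f : V -> R) (m : R) v :
  harmonic_off f -> (forall u, 0 <= f u) -> 0 <= m ->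
  m * pr v (has (fun u => m <= f u)) <= f v.
Proof.
move=> fh f0 m0; have [w0 w0W] := set0Pn _ hW.
pose visits := has (fun u => m <= f u).
pose g u := m * pr u visits - f u.
pose K u := (u \notin W) && (f u < m).
have out u : ~~ K u -> g u <= 0.
  rewrite /K negb_and negbK -leNgt /g subr_le0 => /orP[uW|mfu].
    by rewrite (pr_W hc _ uW) /= orbF; case: ifP; rewrite ?mulr1 ?mulr0.
  by apply: le_trans mfu; rewrite ler_piMr // (pr_le1 hc).
have sub u : K u -> subharmonic_at c g u.
  case/andP=> uW fum.
  have q_rec : pr u visits = \sum_x trans c u x * pr x visits.
    rewrite (pr_rec hc _ uW); apply: eq_bigr => x _; congr (_ * _).
    by apply: pr_ext => t; rewrite /visits /= leNgt fum.
  rewrite /subharmonic_at /g q_rec {1}(fh _ uW) mulr_sumr -sumrB.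
  by apply: ler_sum => x _; rewrite mulrBr mulrCA.
have out_ex : exists z, ~~ K z by exists w0; rewrite /K w0W.
rewrite -subr_le0 -/(g v); have [Kv|Kv] := boolP (K v); last exact: out.
have [z [u [Kz _ _ le_vz]]] := max_principle hc hconn sub out_ex Kv.
exact: le_trans le_vz (out z Kz).
Qed.

(* One direction of the theorem for a fixed target set B, combining (2)
   with (3) for m = f(y): f(y) − f(x) <= m (1 − q) <= 1 − P(disconnect). *)
Lemma hitprob_diff_le B x y :
  hitprob B y - hitprob B x <= pr x (fun p => ~~ `[< disconnects c p y W >]).
Proof.
set f := hitprob B; set m := f y.
pose visits := has (fun u => m <= f u).
have disc_visits : pr x (fun p => `[< disconnects c p y W >]) <= pr x visits.
  apply: (pr_mono hc) => t /asboolP hd.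
  exact: disconnects_level (hitprob_harmonic B) hd.
have slack : m - m * pr x visits <= 1 - pr x visits.
  by rewrite -{1}[m]mulr1 -mulrBr ler_piMl ?subr_ge0 ?(pr_le1 hc).
have bound : m * pr x visits <= f x.
  exact: level_visit_bound (hitprob_harmonic B) (fun u => pr_ge0 hc _ _ _)
    (pr_ge0 hc _ _ _).
have := pr_compl x (fun p => `[< disconnects c p y W >]).
by lra.
Qed.

End HittingLaw.

Theorem mainTheorem4 (R : realType) (V : finType) (c : V -> V -> R)
  (W : {set V}) :
  conductance c -> connected_graph c -> planar c -> (W != finset.set0) ->
  forall x y : V, x \notin W -> y \notin W ->
  (dTV_hit c W x y <=
     Pstop c W x (fun p => ~~ `[< disconnects c p y W >]))%E.
Proof.
move=> hc hconn _ hW x y _ _; rewrite /dTV_hit (PstopE hc).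
apply: (big_ind (fun e => e <= _)%E) => [|e1 e2 h1 h2|B _].
- exact: leNye.
- by rewrite ge_max h1 h2.
rewrite !(hitprobE _ hc) -EFinB abse_EFin lee_fin ler_norml.
have := hitprob_diff_le hc hconn hW B x y.
have := hitprob_diff_le hc hconn hW (~: B) x y.
rewrite !(hitprob_compl hc hconn hW).
by lra.
Qed.
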